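(* Let $d\geq 2$, let $\mathsf{B}$ be a stacked $(d+1)$-ball on $n$ vertices and let $\mathsf{K}=\partial\mathsf{B}$. Then $\tau(\mathcal{F}(\mathsf{B}))\leq \frac{1}{d+2}n$ and $\tau(\mathcal{F}(\mathsf{K}))\leq \frac{2}{d+2}n$. Furthermore, $\mathcal{F}(\mathsf{B})$ and $\mathcal{F}(\mathsf{K})$ are both $2$-colorable.
   Context: An abstract $m$-simplex $\Delta(V)$ is the set of all subsets of a set $V$ of size $m+1$. A simplicial complex $\mathsf{B}$ is a stacked $(d+1)$-ball if there are abstract $(d+1)$-simplices $\Delta_1,\dots,\Delta_m$ with $\mathsf{B}=\bigcup_{i=1}^m\Delta_i$ such that, writing $\mathsf{B}_k=\bigcup_{i=1}^k\Delta_i$, for every $1\leq k\leq m-1$ the intersection $\mathsf{B}_k\cap\Delta_{k+1}$ is an abstract $d$-simplex whose maximal face is a $d$-dimensional face of both $\partial\mathsf{B}_k$ and $\Delta_{k+1}$. The boundary $\partial\mathsf{B}$ of such a ball is the subcomplex generated by the $d$-dimensional faces contained in exactly one $(d+1)$-simplex $\Delta_i$. $\mathcal{F}(\cdot)$ is the hypergraph of facets (inclusion-maximal faces); $\tau$ is the minimum size of a vertex set meeting every hyperedge; $2$-colorable means the vertices can be $2$-colored with no monochromatic hyperedge. *)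

From mathcomp Require Import all_boot.
Set Implicit Arguments. Unset Strict Implicit. Unset Printing Implicit Defensive.

Section StackedBalls.
Variable V : finType.

Definition gen (F : seq {set V}) : {set {set V}} :=
  [set S : {set V} | has (fun D : {set V} => S \subset D) F].

Definition facets (K : {set {set V}}) : {set {set V}} :=
  [set S in K | [forall T in K, (S \subset T) ==> (T == S)]].

Definition boundary_ridges (d : nat) (F : seq {set V}) : {set {set V}} :=
  [set S : {set V} | (#|S| == d.+1) && (count (fun D : {set V} => S \subset D) F == 1)].

Definition boundary (d : nat) (F : seq {set V}) : {set {set V}} :=
  [set S : {set V} | [exists T in boundary_ridges d F, S \subset T]].

(* D = [:: Delta_1; ...; Delta_m] witnesses that gen D is a stacked (d+1)-ball. *)
Definition stacked_ball (d : nat) (D : seq {set V}) : Prop :=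
  [/\ 0 < size D,
      all (fun X : {set V} => #|X| == d.+2) D &
      forall k, 1 <= k < size D ->
        exists sigma : {set V},
          [/\ #|sigma| = d.+1,
              sigma \subset nth set0 D k,
              sigma \in boundary d (take k D) &
              gen (take k D) :&: gen [:: nth set0 D k] = powerset sigma]].

Definition transversal (H : {set {set V}}) (T : {set V}) : bool :=
  [forall e in H, [exists x in e, x \in T]].

Definition tau (H : {set {set V}}) : nat :=
  \big[minn/#|V|]_(T : {set V} | transversal H T) #|T|.

Definition two_colorable (H : {set {set V}}) : Prop :=
  exists c : V -> bool,
    forall e, e \in H -> exists x, exists y, [/\ x \in e, y \in e & c x != c y].

End StackedBalls.

From Pilot Require Import Defs.
From mathcomp Require Import all_boot.
From mathcomp Require Import zify.
Set Implicit Arguments. Unset Strict Implicit. Unset Printing Implicit Defensive.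

(* A stacked (d+1)-ball has a proper (d+2)-colouring of its vertices in which
   every simplex is rainbow: colour the first simplex injectively; each later
   simplex is glued along a d-face of the boundary, so its one remaining vertex
   lies in no earlier simplex and can take the single colour missing on that
   face.  Facets of B are the simplices and carry all d+2 colours, so the
   smallest colour class meets all of them; facets of the boundary carry d+1
   colours, so the union of the two smallest classes meets all of them.
   Splitting the colours into a pair and the remaining d >= 2 colours gives a
   2-colouring in which no facet (at least d+1 >= 3 colours) is monochromatic. *)

Lemma tau_le_card (V : finType) (H : {set {set V}}) (T : {set V}) :
  Defs.transversal H T -> tau H <= #|T|.
Proof.
move=> HT; rewrite /tau; have : T \in index_enum {set V} := mem_index_enum T.
elim: index_enum => // T' r IHr; rewrite inE big_cons => /predU1P[<-|/IHr le_r].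
  by rewrite HT geq_minl.
by case: ifP => // _; rewrite geq_min le_r orbT.
Qed.

Lemma facets_gen_in (V : finType) (D : seq {set V}) (e : {set V}) :
  e \in facets (gen D) -> e \in D.
Proof.
case/setIdP=> /[!inE] /hasP[X XD eX] /forall_inP max_e.
have X_gen : X \in gen D by rewrite inE; apply/hasP; exists X.
by rewrite -(eqP (implyP (max_e X X_gen) eX)).
Qed.

Lemma facets_boundary_ridge (V : finType) (d : nat) (D : seq {set V}) (e : {set V}) :
  e \in facets (boundary d D) -> #|e| = d.+1 /\ exists2 X, X \in D & e \subset X.
Proof.
case/setIdP=> /[!inE] /exists_inP[T T_ridge eT] /forall_inP max_e.
have T_bd : T \in boundary d D by rewrite inE; apply/exists_inP; exists T.
move: T_ridge; rewrite -(eqP (implyP (max_e T T_bd) eT)) inE => /andP[/eqP card_e count_e].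
by split=> //; apply/hasP; rewrite has_count (eqP count_e).
Qed.

Section RainbowColoring.
Variables (V : finType) (k : nat).

Definition rainbow (col : V -> 'I_k) (F : seq {set V}) :=
  forall X, X \in F -> {in X &, injective col}.

Lemma rainbow_simplex (X : {set V}) :
  0 < #|X| <= k -> exists col : V -> 'I_k, rainbow col [:: X].
Proof.
case/andP=> /card_gt0P[x0 Xx0] leXk.
exists (fun x => widen_ord leXk (enum_rank_in Xx0 x)) => _ /[!inE] /eqP-> x y xX yX.
move/(congr1 val)=> /= /val_inj eq_rank.
by rewrite -(enum_rankK_in Xx0 xX) eq_rank enum_rankK_in.
Qed.

Lemma fresh_color (col : V -> 'I_k) (S : {set V}) :
  #|S| < k -> exists c, c \notin col @: S.
Proof.
move=> ltSk; apply/existsP; rewrite -negb_forall; apply: contraTN ltSk.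
move=> /forallP allS; rewrite -leqNgt.
have/subset_leq_card : [set: 'I_k] \subset col @: S by apply/subsetP=> c _; exact: allS.
by rewrite cardsT card_ord => /leq_trans; apply; exact: leq_imset_card.
Qed.

Lemma apex_notin_stack (P : seq {set V}) (X S : {set V}) v :
  gen P :&: gen [:: X] = powerset S -> v \in X :\: S ->
  forall Y, Y \in P -> v \notin Y.
Proof.
move=> capPX /setDP[vX vS] Y YP; apply: contraNN vS => vY.
have : [set v] \in gen P :&: gen [:: X].
  by rewrite !inE /= sub1set vX andbT; apply/hasP; exists Y; rewrite ?sub1set.
by rewrite capPX powersetE sub1set.
Qed.

Lemma rainbow_glue (col : V -> 'I_k) (P : seq {set V}) (X S : {set V}) v c :
  rainbow col P -> (forall Y, Y \in P -> v \notin Y) -> v \notin S ->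
  X \subset v |: S -> {in S &, injective col} -> c \notin col @: S ->
  rainbow (fun x => if x == v then c else col x) (rcons P X).
Proof.
move=> rbP vP vS XvS injS cS Y; rewrite mem_rcons inE => /predU1P[->|YP].
  have colS x : x \in S -> c != col x by move=> xS; apply: contraNneq cS => ->; exact: imset_f.
  have neqS x : x \in S -> (x == v) = false by move=> xS; apply: contraNF vS => /eqP<-.
  move=> x y /(subsetP XvS)/setU1P[->|xS] /(subsetP XvS)/setU1P[->|yS] //.
  - by rewrite eqxx neqS // => /eqP; rewrite (negbTE (colS y yS)).
  - by rewrite eqxx neqS // => /esym/eqP; rewrite (negbTE (colS x xS)).
  - by rewrite !neqS //; exact: injS.
have neqY z : z \in Y -> (z == v) = false by move=> zY; apply: contraNF (vP Y YP) => /eqP<-.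
by move=> x y xY yY; rewrite !neqY //; exact: (rbP Y YP).
Qed.

Lemma rainbow_stack (col : V -> 'I_k) (P : seq {set V}) (X S : {set V}) :
  rainbow col P -> S \subset X -> #|X| = #|S|.+1 -> #|S| < k ->
  gen P :&: gen [:: X] = powerset S ->
  exists col' : V -> 'I_k, rainbow col' (rcons P X).
Proof.
move=> rbP SX cardX ltSk capPX.
have /cards1P[v XSv] : #|X :\: S| == 1 by rewrite cardsD (setIidPr SX) cardX subSnn.
have [Y YP SY] : exists2 Y, Y \in P & S \subset Y.
  have : S \in gen P :&: gen [:: X] by rewrite capPX powersetE.
  by rewrite inE => /andP[/[!inE]/hasP].
have [c cS] := fresh_color col ltSk.
exists (fun x => if x == v then c else col x).
apply: rainbow_glue cS => //.
- by apply: apex_notin_stack capPX _; rewrite XSv set11.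
- by have /setDP[] : v \in X :\: S by rewrite XSv set11.
- by apply/subsetP=> x xX; rewrite -XSv !inE xX; case: (x \in S).
- by move=> x y xS yS; apply: (rbP Y) => //; apply: (subsetP SY).
Qed.

End RainbowColoring.

Lemma stacked_ball_rainbow (V : finType) (d : nat) (D : seq {set V}) :
  stacked_ball d D -> exists col : V -> 'I_d.+2, rainbow col D.
Proof.
case=> _ /allP cardD glued.
suff /(_ (size D) (leqnn _)) : forall m, m <= size D ->
    exists col : V -> 'I_d.+2, rainbow col (take m D) by rewrite take_size.
elim=> [|m IHm] ltmD; first by exists (fun _ => ord0) => X; rewrite take0.
have cardDm : #|nth set0 D m| = d.+2 by apply/eqP/cardD/mem_nth.
rewrite (take_nth set0 ltmD); case: m IHm ltmD cardDm => [|m] IHm ltmD cardDm.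
  by rewrite take0 /=; apply: (@rainbow_simplex V d.+2); rewrite cardDm leqnn.
have [col rbm] := IHm (ltnW ltmD).
have [S [cardS SDm _ capS]] := glued m.+1 ltmD.
by apply: rainbow_stack rbm SDm _ _ capS; rewrite cardS.
Qed.

Section ColorClasses.
Variables (V : finType) (k : nat) (col : V -> 'I_k).

Lemma rainbow_meets_colors (e : {set V}) (J : {set 'I_k}) :
  {in e &, injective col} -> k < #|e| + #|J| -> exists2 x, x \in e & col x \in J.
Proof.
move=> inj_e ltk; apply/exists_inP; apply: contraTT ltk => /exists_inPn colJ.
have/subset_leq_card : col @: e \subset ~: J.
  by apply/subsetP=> _ /imsetP[x xe ->]; rewrite inE colJ.
rewrite card_in_imset // -leqNgt => le_e; rewrite -[k in _ <= k](card_ord k) -(cardsC J).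
by rewrite addnC leq_add2l.
Qed.

Variable D : seq {set V}.
Hypothesis rainbowD : rainbow col D.

Definition color_class (J : {set 'I_k}) : {set V} :=
  [set x in \bigcup_(X <- D) X | col x \in J].

Lemma card_color_class (J : {set 'I_k}) :
  #|color_class J| = \sum_(j in J) #|color_class [set j]|.
Proof.
rewrite -sum1_card (partition_big col (fun j => j \in J)) => [|x]; last by rewrite inE => /andP[].
apply: eq_bigr => j jJ; rewrite -sum1_card; apply: eq_bigl => x.
by rewrite !inE; case: eqP => [->|_]; rewrite ?jJ ?andbF ?andbT.
Qed.

Lemma sum_card_color_classes :
  \sum_j #|color_class [set j]| = #|\bigcup_(X <- D) X|.
Proof.
transitivity (\sum_(j in [set: 'I_k]) #|color_class [set j]|).
  by apply: eq_bigl => j; rewrite inE.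
by rewrite -card_color_class; apply: eq_card => x; rewrite !inE andbT.
Qed.

Section FacetHypergraph.
Variable H : {set {set V}}.
Hypothesis H_in_simplex : forall e, e \in H -> exists2 X, X \in D & e \subset X.

Lemma meets_color_class (e : {set V}) (J : {set 'I_k}) :
  e \in H -> k < #|e| + #|J| -> exists2 x, x \in e & x \in color_class J.
Proof.
move=> eH ltk; have [X XD eX] := H_in_simplex eH.
have inj_e : {in e &, injective col}.
  by move=> x y xe ye; apply: (rainbowD XD); apply: (subsetP eX).
have [x xe xJ] := rainbow_meets_colors inj_e ltk.
exists x; rewrite // inE xJ andbT bigcup_seq.
by apply/bigcupP; exists X; rewrite // (subsetP eX).
Qed.

Lemma transversal_color_class (J : {set 'I_k}) :
  (forall e, e \in H -> k < #|e| + #|J|) -> Defs.transversal H (color_class J).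
Proof.
move=> ltk; apply/forall_inP=> e eH; apply/exists_inP.
exact: meets_color_class (ltk e eH).
Qed.

Lemma tau_le_color_class j :
  (forall e, e \in H -> k <= #|e|) -> tau H <= #|color_class [set j]|.
Proof.
move=> le_k; apply/tau_le_card/transversal_color_class => e eH.
by rewrite cards1 addn1 ltnS le_k.
Qed.

Lemma tau_le_two_color_classes j1 j2 : j1 != j2 ->
  (forall e, e \in H -> k <= #|e|.+1) ->
  tau H <= #|color_class [set j1]| + #|color_class [set j2]|.
Proof.
move=> j12 le_k.
rewrite -(big_set1 addn j2 (fun j => #|color_class [set j]|)) -big_setU1 ?inE //.
rewrite -card_color_class.
by apply/tau_le_card/transversal_color_class => e eH; rewrite cards2 j12 addn2 ltnS le_k.
Qed.

Lemma two_colorable_color_split (J : {set 'I_k}) :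
  (forall e, e \in H -> k < #|e| + #|J| /\ k < #|e| + #|~: J|) -> two_colorable H.
Proof.
move=> ltk; exists (fun x => col x \in J) => e eH; have [ltJ ltCJ] := ltk e eH.
have [x xe /setIdP[_ xJ]] := meets_color_class eH ltJ.
have [y ye /setIdP[_ yCJ]] := meets_color_class eH ltCJ.
by exists x, y; rewrite xJ; move: yCJ; rewrite inE => /negbTE->.
Qed.

End FacetHypergraph.
End ColorClasses.

Lemma two_smallest_values (k : nat) (f : 'I_k -> nat) : 1 < k ->
  exists j1 j2 : 'I_k,
    [/\ j1 != j2, k * f j1 <= \sum_j f j & k * (f j1 + f j2) <= 2 * \sum_j f j].
Proof.
case: k f => [|[|k]] f // _.
have [j1 _ min_j1] := @arg_minnP _ ord0 xpredT f isT.
have [j0 j0j1] : exists j0, j0 != j1.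
  by case: (eqVneq j1 ord0) => [->|j1_0]; [exists ord_max | exists ord0; rewrite eq_sym].
have [j2 j2j1 min_j2] := @arg_minnP _ j0 (fun j => j != j1) f j0j1.
exists j1, j2; split; first by rewrite eq_sym.
  rewrite -[X in X * f j1 <= _](card_ord k.+2) -sum_nat_const.
  by apply: leq_sum => j _; exact: min_j1.
have le12 : f j1 <= f j2 by exact: min_j1.
have : \sum_(j | j != j1) f j2 <= \sum_(j | j != j1) f j by apply: leq_sum => j; exact: min_j2.
rewrite sum_nat_const cardC1 card_ord [\sum_j f j](bigD1 j1) //=; nia.
Qed.

Lemma exists_color_pair (k : nat) : exists J : {set 'I_k.+2}, #|J| = 2 /\ #|~: J| = k.
Proof.
exists [set ord0; ord_max]; have card_J : #|[set ord0; ord_max : 'I_k.+2]| = 2 by rewrite cards2.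
by split=> //; apply/eqP; rewrite -(eqn_add2l 2) -{1}card_J cardsC card_ord.
Qed.

Theorem proposition3p2 (V : finType) (d : nat) (D : seq {set V}) :
  2 <= d -> stacked_ball d D ->
  let n := #|\bigcup_(X <- D) X| in
  [/\ (d + 2) * tau (facets (gen D)) <= n,
      (d + 2) * tau (facets (boundary d D)) <= 2 * n,
      two_colorable (facets (gen D)) &
      two_colorable (facets (boundary d D))].
Proof.
move=> le2d ballD n; rewrite addn2.
have [col rbD] := stacked_ball_rainbow ballD.
have [_ /allP cardD _] := ballD.
have [j1 [j2 [j12]]] := two_smallest_values (fun j => #|color_class col D [set j]|) isT.
rewrite sum_card_color_classes => small1 small2.
have gen_sub e : e \in facets (gen D) -> exists2 X, X \in D & e \subset X.
  by move/facets_gen_in => eD; exists e.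
have bd_sub e : e \in facets (boundary d D) -> exists2 X, X \in D & e \subset X.
  by case/facets_boundary_ridge.
have card_gen e : e \in facets (gen D) -> #|e| = d.+2 by move/facets_gen_in/cardD/eqP.
have card_bd e : e \in facets (boundary d D) -> #|e| = d.+1 by case/facets_boundary_ridge.
have [J [card_J card_CJ]] := exists_color_pair d.
split.
- apply: leq_trans small1; rewrite leq_mul2l (tau_le_color_class rbD gen_sub) ?orbT //.
  by move=> e /card_gen->.
- apply: leq_trans small2; rewrite leq_mul2l (tau_le_two_color_classes rbD bd_sub j12) ?orbT //.
  by move=> e /card_bd->.
- apply: (two_colorable_color_split (J := J) rbD gen_sub) => e /card_gen->.
  by rewrite card_J card_CJ; split; lia.
- apply: (two_colorable_color_split (J := J) rbD bd_sub) => e /card_bd->.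
  by rewrite card_J card_CJ; split; lia.
Qed.
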